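(* Let $i,j\geq 1$ be integers. For $n\geq 0$, let $U(i,j,n)$ be the set of all triples $(L_1,L_2,L_3)$ of walks of length $n$ with steps $(1,1)$ and $(1,-1)$, where $L_1$ starts at $(0,0)$, $L_2$ starts at $(0,2i)$ and $L_3$ starts at $(0,2i+2j)$. Let $V(i,j,n)$ be the set of triples in $U(i,j,n)$ whose three walks are pairwise nonintersecting, and for $\{a,b\}\in\{\{1,2\},\{2,3\},\{1,3\}\}$ let $W_{ab}(n)$ be the set of triples in $U(i,j,n)$ such that $L_a$ and $L_b$ do not intersect. Define $V_{i,j}(t)=\sum_{n\geq 0}|V(i,j,n)|t^n$ and $W_{ab}(t)=\sum_{n\geq0}|W_{ab}(n)|t^n$. Then $$V_{i,j}(t)=W_{12}(t)+W_{23}(t)-W_{13}(t).$$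
   Context: Two walks intersect if they share a common lattice point; otherwise they are nonintersecting. *)

From mathcomp Require Import all_boot all_order all_algebra.
Set Implicit Arguments. Unset Strict Implicit. Unset Printing Implicit Defensive.
Import Order.TTheory GRing.Theory Num.Theory.
Local Open Scope ring_scope.

(* A walk of length n with steps (1,1) (true) and (1,-1) (false). *)
Definition walk (n : nat) := (n.-tuple bool)%type.

(* Height (y-coordinate) after k steps of the walk w started at (0, s);
   the walk visits the lattice points (k, height s w k), 0 <= k <= n. *)
Definition height (s : int) (w : seq bool) (k : nat) : int :=
  s + \sum_(b <- take k w) (if b then 1 else -1).

(* Two walks of length n (started at heights sa, sb on the line x = 0)
   intersect iff they share a lattice point, i.e. have the same height at
   some common abscissa k in {0..n}. *)
Definition intersect (n : nat) (sa : int) (wa : walk n) (sb : int) (wb : walk n) : bool :=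
  [exists k : 'I_n.+1, height sa wa k == height sb wb k].

Definition triple (n : nat) := (walk n * walk n * walk n)%type.

Definition s1 (i j : nat) : int := 0.
Definition s2 (i j : nat) : int := (2 * i)%:Z.
Definition s3 (i j : nat) : int := (2 * i + 2 * j)%:Z.

Definition L1 n (t : triple n) : walk n := t.1.1.
Definition L2 n (t : triple n) : walk n := t.1.2.
Definition L3 n (t : triple n) : walk n := t.2.

Definition Uset (i j n : nat) : {set triple n} := [set: triple n].

Definition Vset (i j n : nat) : {set triple n} :=
  [set t in Uset i j n |
     [&& ~~ intersect (s1 i j) (L1 t) (s2 i j) (L2 t),
         ~~ intersect (s2 i j) (L2 t) (s3 i j) (L3 t) &
         ~~ intersect (s1 i j) (L1 t) (s3 i j) (L3 t)]].

Definition W12set (i j n : nat) : {set triple n} :=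
  [set t in Uset i j n | ~~ intersect (s1 i j) (L1 t) (s2 i j) (L2 t)].
Definition W23set (i j n : nat) : {set triple n} :=
  [set t in Uset i j n | ~~ intersect (s2 i j) (L2 t) (s3 i j) (L3 t)].
Definition W13set (i j n : nat) : {set triple n} :=
  [set t in Uset i j n | ~~ intersect (s1 i j) (L1 t) (s3 i j) (L3 t)].

(* Formal power series in t with integer coefficients, represented by their
   coefficient sequence n |-> [t^n]; equality of series = equality of
   coefficient sequences, sum/difference are coefficientwise. *)
Definition fps := (nat -> int)%type.
Definition fps_add (f g : fps) : fps := fun n => f n + g n.
Definition fps_sub (f g : fps) : fps := fun n => f n - g n.

Definition Vgf (i j : nat) : fps := fun n => (#|Vset i j n|)%:Z.
Definition W12gf (i j : nat) : fps := fun n => (#|W12set i j n|)%:Z.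
Definition W23gf (i j : nat) : fps := fun n => (#|W23set i j n|)%:Z.
Definition W13gf (i j : nat) : fps := fun n => (#|W13set i j n|)%:Z.

From mathcomp Require Import all_boot all_order all_algebra zify.
From Stdlib Require Import FunctionalExtensionality.
Set Implicit Arguments. Unset Strict Implicit. Unset Printing Implicit Defensive.
Import Order.TTheory GRing.Theory Num.Theory.
Local Open Scope ring_scope.

(* Two walks whose starting heights differ by an even number keep an even gap,
   and each moves by one per step, so they cannot change order without meeting.
   Hence when L1 misses L2 and L2 misses L3, the triple stays ordered and L1
   misses L3 too: V(i,j,n) = W12 ∩ W23, and by inclusion-exclusion it
   suffices that "L1 meets L3" and "L1 meets L2 and L2 meets L3" are
   equinumerous.  Let k be the first time at which L1 meets L2 or L2 meets L3,
   and exchange the tails after k of the two walks meeting at k.  This is an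
   involution of U(i,j,n); as the walks are strictly ordered before k, the new
   L1 meets L3 exactly when the old L2 did (if L1, L2 were exchanged), resp. the
   old L1 meets L2 (if L2, L3 were exchanged), so it maps the second event onto
   the first. *)

Lemma height0 s w : height s w 0 = s.
Proof. by rewrite /height take0 big_nil addr0. Qed.

Lemma heightS s w k : height s w k.+1 = height s w k +
  (if (k < size w)%N then (if nth false w k then 1 else -1) else 0).
Proof.
rewrite /height; case: ltnP => hk.
  by rewrite (take_nth false hk) -cats1 big_cat big_seq1 /= addrA.
by rewrite !take_oversize ?addr0 // ltnW.
Qed.

Lemma height_step s w k : `|height s w k.+1 - height s w k| <= 1.
Proof. by rewrite heightS; case: ifP => _; [case: ifP|]; lia. Qed.

Lemma height_gap_even s s' (w w' : seq bool) k : size w = size w' ->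
  (2 %| s' - s)%Z -> (2 %| height s' w' k - height s w k)%Z.
Proof.
move=> eq_size even_start; elim: k => [|k IHk]; first by rewrite !height0.
rewrite !heightS eq_size; case: ifP => _; last lia.
by case: (nth false w k); case: (nth false w' k); lia.
Qed.

Lemma lt_before_meet (f g : nat -> int) k :
  (forall l, `|f l.+1 - f l| <= 1) -> (forall l, `|g l.+1 - g l| <= 1) ->
  (forall l, (2 %| g l - f l)%Z) -> f 0 < g 0 ->
  (forall l, (l <= k)%N -> f l != g l) -> f k < g k.
Proof.
move=> f_step g_step gap_even start; elim: k => // k IHk distinct.
have lt_k : f k < g k by apply: IHk => l lk; apply: distinct; lia.
have := f_step k; have := g_step k; have := gap_even k; have := gap_even k.+1.
have := distinct k.+1 (leqnn _); lia.
Qed.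

Lemma height_lt_before_meet sa sb (wa wb : seq bool) k :
  size wa = size wb -> (2 %| sb - sa)%Z -> sa < sb ->
  (forall l, (l <= k)%N -> height sa wa l != height sb wb l) ->
  height sa wa k < height sb wb k.
Proof.
move=> eq_size even_start lt_start; apply: lt_before_meet => [l|l|l|].
- exact: height_step.
- exact: height_step.
- exact: height_gap_even.
- by rewrite !height0.
Qed.

Definition crossover (a : nat) (w v : seq bool) := take a w ++ drop a v.

Lemma height_crossover s s' a (w v : seq bool) k :
  (a <= size w)%N -> height s w a = height s' v a ->
  height s (crossover a w v) k = if (k < a)%N then height s w k else height s' v k.
Proof.
rewrite /crossover /height => le_a meet_a; case: ltnP => hk.
  by rewrite take_cat size_takel // hk take_takel // ltnW.
rewrite -(subnKC hk) !takeD take_size_cat ?size_takel // drop_size_cat ?size_takel //.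
by rewrite !big_cat !addrA meet_a.
Qed.

Lemma crossoverK a (w v : seq bool) : (a <= size w)%N -> (a <= size v)%N ->
  crossover a (crossover a w v) (crossover a v w) = w.
Proof.
move=> le_w le_v; rewrite /crossover take_size_cat ?size_takel //.
by rewrite drop_size_cat ?size_takel // cat_take_drop.
Qed.

Lemma crossover_tupleP n a (w v : n.-tuple bool) : size (crossover a w v) == n.
Proof. by rewrite size_cat size_take size_drop !size_tuple; apply/eqP; case: ltnP; lia. Qed.

Definition crossover_tuple n a (w v : n.-tuple bool) := Tuple (crossover_tupleP a w v).

(* [n.+1] when [P] fails on [0, n]. *)
Definition first_hit n (P : pred nat) := find P (iota 0 n.+1).

Lemma first_hit_le n (P : pred nat) : (first_hit n P <= n.+1)%N.
Proof. by rewrite -[n.+1](size_iota 0) find_size. Qed.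

Lemma first_hit_before n (P : pred nat) k : (k < first_hit n P)%N -> ~~ P k.
Proof.
move=> lt_k; have := before_find 0%N lt_k.
by rewrite nth_iota ?add0n => [->|]; last exact: leq_trans lt_k (first_hit_le n P).
Qed.

Lemma first_hitP n (P : pred nat) : (first_hit n P <= n)%N -> P (first_hit n P).
Proof.
move=> le_n; have has_P : has P (iota 0 n.+1) by rewrite has_find size_iota.
by have := nth_find 0%N has_P; rewrite nth_iota.
Qed.

Lemma first_hit_min n (P : pred nat) k : P k -> (first_hit n P <= k)%N.
Proof. by move=> Pk; rewrite leqNgt; apply/negP => /first_hit_before; rewrite Pk. Qed.

Lemma eq_first_hit n (P Q : pred nat) :
  (forall k, (k <= first_hit n P)%N -> P k = Q k) -> first_hit n Q = first_hit n P.
Proof.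
move=> eqPQ; apply/eqP; rewrite eqn_leq; apply/andP; split.
  have [le_n|lt_n] := leqP (first_hit n P) n; last exact: leq_trans (first_hit_le n Q) lt_n.
  by apply: first_hit_min; rewrite -eqPQ //; apply: first_hitP.
rewrite leqNgt; apply/negP => lt_Q.
have le_n : (first_hit n Q <= n)%N by rewrite -ltnS (leq_trans lt_Q) ?first_hit_le.
have := first_hitP le_n; rewrite -eqPQ; last exact: ltnW.
by rewrite (negbTE (first_hit_before lt_Q)).
Qed.

Section Switching.
Variables i j n : nat.
Hypotheses (i_gt0 : (0 < i)%N) (j_gt0 : (0 < j)%N).

Definition H1 (t : triple n) := height (s1 i j) (L1 t).
Definition H2 (t : triple n) := height (s2 i j) (L2 t).
Definition H3 (t : triple n) := height (s3 i j) (L3 t).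

Definition meet12 (t : triple n) := [exists k : 'I_n.+1, H1 t k == H2 t k].
Definition meet23 (t : triple n) := [exists k : 'I_n.+1, H2 t k == H3 t k].
Definition meet13 (t : triple n) := [exists k : 'I_n.+1, H1 t k == H3 t k].

Definition first_meet (t : triple n) :=
  first_hit n (fun k => (H1 t k == H2 t k) || (H2 t k == H3 t k)).

Lemma ordered_before_first_meet t k :
  (k < first_meet t)%N -> H1 t k < H2 t k /\ H2 t k < H3 t k.
Proof.
move=> lt_k; have distinct l : (l <= k)%N -> (H1 t l != H2 t l) && (H2 t l != H3 t l).
  by move=> le_l; rewrite -negb_or; exact: first_hit_before (leq_ltn_trans le_l lt_k).
split; apply: height_lt_before_meet; rewrite ?size_tuple /s1 /s2 /s3 //;
  by [lia | move=> l /distinct /andP[]].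
Qed.

Lemma meet12_or_23 t : meet12 t || meet23 t = (first_meet t <= n)%N.
Proof.
apply/idP/idP => [/orP[] /existsP[k /eqP meet_k] | le_n].
- rewrite -ltnS (leq_ltn_trans _ (ltn_ord k)) //.
  by apply: first_hit_min; rewrite meet_k eqxx.
- rewrite -ltnS (leq_ltn_trans _ (ltn_ord k)) //.
  by apply: first_hit_min; rewrite meet_k eqxx orbT.
have /orP[] := first_hitP le_n => meet_m; apply/orP; [left|right];
  by apply/existsP; exists (Ordinal (le_n : (first_meet t < n.+1)%N)).
Qed.

Lemma meet13_meet12_or_23 t : meet13 t -> meet12 t || meet23 t.
Proof.
rewrite meet12_or_23 leqNgt; apply: contraL => lt_n; apply/existsPn => k.
have [] := ordered_before_first_meet (leq_trans (ltn_ord k) lt_n); lia.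
Qed.

Definition swap12 a (t : triple n) : triple n :=
  (crossover_tuple a (L1 t) (L2 t), crossover_tuple a (L2 t) (L1 t), L3 t).
Definition swap23 a (t : triple n) : triple n :=
  (L1 t, crossover_tuple a (L2 t) (L3 t), crossover_tuple a (L3 t) (L2 t)).

Lemma swap12K a t : (a <= n)%N -> swap12 a (swap12 a t) = t.
Proof.
case: t => [[w1 w2] w3] le_a; congr (_, _, _); apply: val_inj;
  by rewrite /= crossoverK ?size_tuple.
Qed.

Lemma swap23K a t : (a <= n)%N -> swap23 a (swap23 a t) = t.
Proof.
case: t => [[w1 w2] w3] le_a; congr (_, _, _); apply: val_inj;
  by rewrite /= crossoverK ?size_tuple.
Qed.

Section Swap12.
Variables (a : nat) (t : triple n).
Hypotheses (le_a : (a <= n)%N) (meet_a : H1 t a = H2 t a).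

Lemma H1_swap12 k : H1 (swap12 a t) k = if (k < a)%N then H1 t k else H2 t k.
Proof. by apply: height_crossover; rewrite ?size_tuple. Qed.

Lemma H2_swap12 k : H2 (swap12 a t) k = if (k < a)%N then H2 t k else H1 t k.
Proof. by apply: height_crossover; rewrite ?size_tuple. Qed.

Lemma H3_swap12 k : H3 (swap12 a t) k = H3 t k.
Proof. by []. Qed.

Lemma first_meet_swap12 : a = first_meet t -> first_meet (swap12 a t) = a.
Proof.
move=> def_a; rewrite [RHS]def_a; apply: eq_first_hit => k.
rewrite -/(first_meet t) -def_a H1_swap12 H2_swap12 H3_swap12.
rewrite leq_eqVlt => /orP[/eqP-> | -> //].
by rewrite ltnn meet_a !eqxx.
Qed.

End Swap12.

Section Swap23.
Variables (a : nat) (t : triple n).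
Hypotheses (le_a : (a <= n)%N) (meet_a : H2 t a = H3 t a).

Lemma H1_swap23 k : H1 (swap23 a t) k = H1 t k.
Proof. by []. Qed.

Lemma H2_swap23 k : H2 (swap23 a t) k = if (k < a)%N then H2 t k else H3 t k.
Proof. by apply: height_crossover; rewrite ?size_tuple. Qed.

Lemma H3_swap23 k : H3 (swap23 a t) k = if (k < a)%N then H3 t k else H2 t k.
Proof. by apply: height_crossover; rewrite ?size_tuple. Qed.

Lemma first_meet_swap23 : a = first_meet t -> first_meet (swap23 a t) = a.
Proof.
move=> def_a; rewrite [RHS]def_a; apply: eq_first_hit => k.
rewrite -/(first_meet t) -def_a H1_swap23 H2_swap23 H3_swap23.
rewrite leq_eqVlt => /orP[/eqP-> | -> //].
by rewrite ltnn meet_a !eqxx !orbT.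
Qed.

End Swap23.

Definition switch (t : triple n) : triple n :=
  if (first_meet t <= n)%N then
    if H1 t (first_meet t) == H2 t (first_meet t) then swap12 (first_meet t) t
    else swap23 (first_meet t) t
  else t.

Lemma first_meet23 t : (first_meet t <= n)%N -> H1 t (first_meet t) != H2 t (first_meet t) ->
  H2 t (first_meet t) = H3 t (first_meet t).
Proof. by move=> /first_hitP /orP[/eqP-> | /eqP//]; rewrite eqxx. Qed.

Lemma switchK t : switch (switch t) = t.
Proof.
rewrite /switch; have [le_m|lt_m] := leqP (first_meet t) n; last by rewrite leqNgt lt_m.
have [meet12_m|neq12_m] := eqVneq (H1 t (first_meet t)) (H2 t (first_meet t)).
  rewrite first_meet_swap12 // le_m H1_swap12 // H2_swap12 // ltnn meet12_m eqxx.
  exact: swap12K.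
have meet23_m := first_meet23 le_m neq12_m.
rewrite first_meet_swap23 // le_m H1_swap23 H2_swap23 // ltnn -meet23_m (negbTE neq12_m).
exact: swap23K.
Qed.

Lemma meet13_switch t : meet13 (switch t) = meet12 t && meet23 t.
Proof.
rewrite /switch; have [le_m|lt_m] := leqP (first_meet t) n; last first.
  have /norP[/negbTE no12 /negbTE no23] : ~~ (meet12 t || meet23 t).
    by rewrite meet12_or_23 -ltnNge.
  rewrite no12 andFb; apply/negbTE/negP => /meet13_meet12_or_23.
  by rewrite no12 no23.
have lt_m : (first_meet t < n.+1)%N by rewrite ltnS.
have [meet12_m|neq12_m] := eqVneq (H1 t (first_meet t)) (H2 t (first_meet t)).
  have -> : meet12 t by apply/existsP; exists (Ordinal lt_m); apply/eqP.
  rewrite andTb; apply: eq_existsb => k.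
  rewrite H1_swap12 // H3_swap12; case: ifP => // lt_k.
  by have [lt12 lt23] := ordered_before_first_meet lt_k; rewrite !lt_eqF // (lt_trans lt12).
have meet23_m := first_meet23 le_m neq12_m.
have -> : meet23 t by apply/existsP; exists (Ordinal lt_m); apply/eqP.
rewrite andbT; apply: eq_existsb => k.
rewrite H1_swap23 H3_swap23 //; case: ifP => // lt_k.
by have [lt12 lt23] := ordered_before_first_meet lt_k; rewrite !lt_eqF // (lt_trans lt12).
Qed.

Lemma card_meet13 : #|[set t | meet13 t]| = #|[set t | meet12 t && meet23 t]|.
Proof.
rewrite -(card_preimset _ (can_inj switchK)); apply: eq_card => t.
by rewrite !inE meet13_switch.
Qed.

Lemma card_Vset :
  (#|Vset i j n| + #|W13set i j n| = #|W12set i j n| + #|W23set i j n|)%N.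
Proof.
have -> : Vset i j n = W12set i j n :&: W23set i j n.
  apply/setP => t; rewrite !inE.
  change ([&& ~~ meet12 t, ~~ meet23 t & ~~ meet13 t] = ~~ meet12 t && ~~ meet23 t).
  have := @meet13_meet12_or_23 t.
  by case: (meet12 t); case: (meet23 t); case: (meet13 t) => // /(_ isT).
have card_union : #|W12set i j n :|: W23set i j n| = #|W13set i j n|.
  have -> : W12set i j n :|: W23set i j n = ~: [set t | meet12 t && meet23 t].
    by apply/setP => t; rewrite !inE negb_and.
  have -> : W13set i j n = ~: [set t | meet13 t] by apply/setP => t; rewrite !inE.
  by apply/eqP; rewrite -(eqn_add2l #|[set t | meet13 t]|) cardsC card_meet13 cardsC.
by rewrite -card_union addnC cardsUI.
Qed.

End Switching.

Theorem proposition2p2 (i j : nat) (hi : (1 <= i)%N) (hj : (1 <= j)%N) :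
  Vgf i j = fps_sub (fps_add (W12gf i j) (W23gf i j)) (W13gf i j).
Proof.
apply: functional_extensionality => n; rewrite /Vgf /fps_sub /fps_add /W12gf /W23gf /W13gf.
have := card_Vset n hi hj; lia.
Qed.
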